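(* Absorption fails on the strict face of the cube: (i) applicative order $SSS$ absorbs none of $ISI$, call-by-value $ISS$, head applicative order $SSI$, i.e. $SSS\circ st\neq SSS$ for each $st\in\{ISI,ISS,SSI\}$ (witness $(\lambda x.y)(\lambda k.k\,\Omega)$); (ii) $ISS\circ ISI\neq ISS$ (witness $(\lambda x.y)(x\,\Omega)$); (iii) $SSI\circ ISI\neq SSI$ (witness $(\lambda x.y)(\lambda x.\Omega)$). Here $\Omega=(\lambda x.xx)(\lambda x.xx)$.
   Context: Terms: $\Lambda ::= x\mid\lambda x.\Lambda\mid\Lambda\Lambda$; $[N/x]B$ is capture-avoiding substitution. An evaluator is a partial function $\Lambda\rightharpoonup\Lambda$ defined by inference rules, undefined (divergent) where no finite derivation exists; $\mathrm{id}$ is the identity; composition is undefined where the inner evaluator is. Eval-apply template: given evaluators $la,op_1,ar_1,op_2,ar_2$ (possibly $ea$ itself), $ea$ is defined by (var) $ea(x)=x$; (abs) $ea(\lambda x.B)=\lambda x.B'$ if $la(B)=B'$; (con) $ea(MN)=B'$ if $op_1(M)=\lambda x.B$, $ar_1(N)=N'$, $ea([N'/x]B)=B'$; (neu) $ea(MN)=M''N'$ if $op_1(M)=M'$, $M'$ not an abstraction, $op_2(M')=M''$, $ar_2(N)=N'$. Uniform evaluator $XYZ\in\{I,S\}^3$: $op_1=ea$, $op_2=\mathrm{id}$, and $la$, $ar_1$, $ar_2$ equal to $ea$ itself when the corresponding letter $X$, $Y$, $Z$ is $S$ and to $\mathrm{id}$ when it is $I$. A strategy $st_2$ absorbs $st_1$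 iff $st_2\circ st_1=st_2$. *)

(* Lambda terms in de Bruijn representation: alpha-equivalent
   named terms are identified, and beta-substitution [N/x]B is the standard
   capture-avoiding de Bruijn substitution. Free variables are indices that
   point beyond all enclosing binders. *)
From Stdlib Require Import Arith.

Inductive term : Type :=
| Var : nat -> term
| Lam : term -> term
| App : term -> term -> term.

Fixpoint shift (c : nat) (t : term) : term :=
  match t with
  | Var i => if Nat.leb c i then Var (S i) else Var i
  | Lam b => Lam (shift (S c) b)
  | App m n => App (shift c m) (shift c n)
  end.

Fixpoint subst (j : nat) (s : term) (t : term) : term :=
  match t with
  | Var i => if Nat.eqb i j then s
             else if Nat.ltb j i then Var (pred i) else Var i
  | Lam b => Lam (subst (S j) (shift 0 s) b)
  | App m n => App (subst j s m) (subst j s n)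
  end.

(* [N/x]B where B is the body of \x.B *)
Definition beta (B N : term) : term := subst 0 N B.

Definition is_abs (t : term) : Prop :=
  match t with Lam _ => True | _ => False end.

(* An evaluator is a partial function, represented by its graph
   (a relation defined by inference rules; undefined = no derivation). *)
Definition evaluator := term -> term -> Prop.

(* Uniform evaluator XYZ: flags X (la), Y (ar1), Z (ar2); true = S
   (the evaluator itself), false = I (identity). op1 = ea, op2 = id. *)
Inductive uniform (X Y Z : bool) : evaluator :=
| u_var : forall x, uniform X Y Z (Var x) (Var x)
| u_abs_I : forall B, X = false -> uniform X Y Z (Lam B) (Lam B)
| u_abs_S : forall B B', X = true -> uniform X Y Z B B' ->
    uniform X Y Z (Lam B) (Lam B')
| u_con_I : forall M N B B', Y = false ->
    uniform X Y Z M (Lam B) ->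
    uniform X Y Z (beta B N) B' ->
    uniform X Y Z (App M N) B'
| u_con_S : forall M N N' B B', Y = true ->
    uniform X Y Z M (Lam B) ->
    uniform X Y Z N N' ->
    uniform X Y Z (beta B N') B' ->
    uniform X Y Z (App M N) B'
| u_neu_I : forall M N M', Z = false ->
    uniform X Y Z M M' -> ~ is_abs M' ->
    uniform X Y Z (App M N) (App M' N)
| u_neu_S : forall M N M' N', Z = true ->
    uniform X Y Z M M' -> ~ is_abs M' ->
    uniform X Y Z N N' ->
    uniform X Y Z (App M N) (App M' N').

Definition SSS : evaluator := uniform true true true.
Definition ISI : evaluator := uniform false true false.
Definition ISS : evaluator := uniform false true true.
Definition SSI : evaluator := uniform true true false.

Definition compose (st2 st1 : evaluator) : evaluator :=
  fun t v => exists u, st1 t u /\ st2 u v.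

Definition absorbs (st2 st1 : evaluator) : Prop :=
  forall t v, compose st2 st1 t v <-> st2 t v.

(* Each witness is (λx.y) N with N a value of the absorbed strategy st1, so
   st1 maps it to y, which st2 leaves alone.  Since st2 evaluates arguments
   before contracting, it must evaluate N, which hides a copy of Ω under a λ
   (reached when st2 evaluates bodies) or as the argument of a neutral term
   (reached when st2 evaluates such arguments); hence st2 diverges on the
   witness itself. *)

Definition defined (st : evaluator) (t : term) : Prop := exists v, st t v.

Lemma not_absorbs_of (st2 st1 : evaluator) t u v :
  st1 t u -> st2 u v -> ~ st2 t v -> ~ absorbs st2 st1.
Proof. intros H1 H2 Hnot Habs. apply Hnot, Habs. exists u; split; assumption. Qed.

Definition delta : term := Lam (App (Var 0) (Var 0)).
Definition Omega : term := App delta delta.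

Section Uniform.

Variables X Y Z : bool.

Notation ev := (uniform X Y Z).

Lemma uniform_Var_inv n v : ev (Var n) v -> v = Var n.
Proof. intro H. inversion H; reflexivity. Qed.

Lemma uniform_delta_inv v : ev delta v -> v = delta.
Proof.
  intro H. inversion H as [| | B B' _ Hbody | | | |]; subst; try reflexivity.
  inversion Hbody as [| | | ? ? ? ? _ HM | ? ? ? ? ? _ HM | ? ? ? _ HM |
                      ? ? ? ? _ HM _ HN]; subst;
    apply uniform_Var_inv in HM; try discriminate; subst; try reflexivity.
  apply uniform_Var_inv in HN; subst; reflexivity.
Qed.

Lemma uniform_Omega_diverges : ~ defined ev Omega.
Proof.
  intros [v H]. remember Omega as t eqn:Ht. revert Ht.
  induction H as [| | | M N B B' _ HM _ _ IH | M N N' B B' _ HM _ HN _ _ IH |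
                  M N M' _ HM _ Hna | M N M' N' _ HM _ Hna _ _];
    intro Ht; try discriminate; injection Ht as -> ->.
  - apply uniform_delta_inv in HM. injection HM as HB. subst B. exact (IH eq_refl).
  - apply uniform_delta_inv in HM. injection HM as HB. subst B.
    apply uniform_delta_inv in HN. subst N'. exact (IH eq_refl).
  - apply uniform_delta_inv in HM. subst M'. exact (Hna I).
  - apply uniform_delta_inv in HM. subst M'. exact (Hna I).
Qed.

Lemma uniform_Lam_diverges B : X = true -> ~ defined ev B -> ~ defined ev (Lam B).
Proof.
  intros HX HB [v H]. inversion H; subst; [discriminate | apply HB; eexists; eassumption].
Qed.

Lemma uniform_neutral_diverges n N :
  Z = true -> ~ defined ev N -> ~ defined ev (App (Var n) N).
Proof.
  intros HZ HN [v H].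
  inversion H as [| | | ? ? ? ? _ HM | ? ? ? ? ? _ HM | | ? ? ? ? _ _ _ HNv];
    try (apply uniform_Var_inv in HM; discriminate); try congruence.
  apply HN; eexists; eassumption.
Qed.

Lemma uniform_neutral_value n N : Z = false -> ev (App (Var n) N) (App (Var n) N).
Proof. intro HZ. apply u_neu_I; [exact HZ | apply u_var | intros []]. Qed.

Lemma uniform_Lam_Var n : ev (Lam (Var n)) (Lam (Var n)).
Proof. destruct X eqn:HX; [apply u_abs_S, u_var | apply u_abs_I]; reflexivity. Qed.

Hypothesis strict_args : Y = true.

Lemma uniform_app_Lam_needs_arg B N v : ev (App (Lam B) N) v -> defined ev N.
Proof.
  intro H.
  inversion H as [| | | | ? ? N' ? ? _ _ HN | ? ? M' _ HM Hna | ? ? M' ? _ HM Hna];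
    try congruence.
  - exists N'; exact HN.
  - inversion HM; subst; contradiction (Hna I).
  - inversion HM; subst; contradiction (Hna I).
Qed.

(* In de Bruijn notation [Lam (Var 1)] is λx.y with y the free variable [Var 0]. *)
Lemma uniform_const_app N N' : ev N N' -> ev (App (Lam (Var 1)) N) (Var 0).
Proof.
  intro HN. eapply u_con_S; [exact strict_args | apply uniform_Lam_Var | exact HN |].
  apply u_var.
Qed.

End Uniform.

Lemma not_absorbs_const_app X1 Z1 X2 Z2 N N' :
  uniform X1 true Z1 N N' -> ~ defined (uniform X2 true Z2) N ->
  ~ absorbs (uniform X2 true Z2) (uniform X1 true Z1).
Proof.
  intros HN Hdiv.
  apply (not_absorbs_of _ _ (App (Lam (Var 1)) N) (Var 0) (Var 0)).
  - eapply uniform_const_app; [reflexivity | exact HN].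
  - apply u_var.
  - intro H. exact (Hdiv (uniform_app_Lam_needs_arg _ _ _ eq_refl _ _ _ H)).
Qed.

Theorem mainTheorem6 :
  ~ absorbs SSS ISI /\ ~ absorbs SSS ISS /\ ~ absorbs SSS SSI /\
  ~ absorbs ISS ISI /\ ~ absorbs SSI ISI.
Proof.
  pose (lam_app_Omega := Lam (App (Var 0) Omega)).
  assert (SSS_diverges : ~ defined SSS lam_app_Omega).
  { apply uniform_Lam_diverges; [reflexivity |].
    apply uniform_neutral_diverges; [reflexivity | apply uniform_Omega_diverges]. }
  repeat split.
  - apply (not_absorbs_const_app _ _ _ _ lam_app_Omega lam_app_Omega); trivial.
    apply u_abs_I; reflexivity.
  - apply (not_absorbs_const_app _ _ _ _ lam_app_Omega lam_app_Omega); trivial.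
    apply u_abs_I; reflexivity.
  - apply (not_absorbs_const_app _ _ _ _ lam_app_Omega lam_app_Omega); trivial.
    apply u_abs_S; [reflexivity | apply uniform_neutral_value; reflexivity].
  - apply (not_absorbs_const_app _ _ _ _ (App (Var 0) Omega) (App (Var 0) Omega)).
    + apply uniform_neutral_value; reflexivity.
    + apply uniform_neutral_diverges; [reflexivity | apply uniform_Omega_diverges].
  - apply (not_absorbs_const_app _ _ _ _ (Lam Omega) (Lam Omega)).
    + apply u_abs_I; reflexivity.
    + apply uniform_Lam_diverges; [reflexivity | apply uniform_Omega_diverges].
Qed.
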